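(* Consider the system \[ x_{k+1} = x_k - \rho y_k + \hat g(y_k,w_k),\qquad y_{k+1} = (1-\beta)y_k + \hat h(y_{k-1},w_{k-1})\bigl(J(x_k)-J(x_{k-1})\bigr) \] with the setup described in the context. Then for every $k\ge1$, \[ \begin{aligned} \mathbb{E}[\tilde x_{k+1}y_{k+1}]&=-\rho(1-\beta)\mathbb{E}[y_k^2]+\mu\gamma\,\mathbb{E}[\tilde x_{k-1}^2]+\mu\gamma\frac{3\rho^2+\psi}{2}\mathbb{E}[y_{k-1}^2]-3\mu\rho\gamma\,\mathbb{E}[\tilde x_{k-1}y_{k-1}]\\ &\quad+(1-\beta-\mu\rho\gamma)\mathbb{E}[\tilde x_ky_k]+\frac{\mu\gamma\psi\varepsilon}{2}\bigl(\varepsilon+2\mathbb{E}[|y_{k-1}|]\bigr). \end{aligned} \]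
   Context: Setup. Parameters: $\rho>0$, $\beta\in(0,2)$, $\varepsilon>0$, $\omega>0$. The random variables $w_i$, $i\in\mathbb{N}\cup\{0\}$, are i.i.d., each taking the value $-\omega$ or $\omega$ with probability $1/2$. The functions $h,g:\mathbb{R}\to\mathbb{R}$ are odd, satisfy $\mathrm{sign}(g(w))=\mathrm{sign}(h(w))$ for all $w$, and $g(w)=h(w)=0$ if and only if $w=0$. Define $\hat h(y,w):=\frac{h(w)}{|y|+\varepsilon}$ and $\hat g(y,w):=(|y|+\varepsilon)g(w)$. The objective is $J(x)=J^*+\frac{\mu}{2}(x-x^* )^2$ with $\mu>0$, $x^*,J^*\in\mathbb{R}$. The initial data $x_0,y_0$ and the initialization $y_1$ (the $y$-update being applied for $k\ge1$) are deterministic. Notation: $\tilde x_k:=x_k-x^*$, $\psi:=\mathbb{E}[g(w_k)^2]$, $\gamma:=\mathbb{E}[h(w_k)g(w_k)]$. *)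

From HB Require Import structures.
From mathcomp Require Import all_boot all_order all_algebra.
From mathcomp Require Import finmap.
From mathcomp Require Import all_classical all_reals all_analysis.
Set Implicit Arguments. Unset Strict Implicit. Unset Printing Implicit Defensive.
Import Order.TTheory GRing.Theory Num.Theory.
Local Open Scope classical_set_scope.
Local Open Scope ring_scope.

Definition expect d (T : measurableType d) (R : realType)
  (P : probability T R) (f : T -> R) : R :=
  fine (\int[P]_t (f t)%:E).

Definition mutually_independent d (T : measurableType d) (R : realType)
  (P : probability T R) (X : nat -> T -> R) : Prop :=
  forall (I : {fset nat}) (B : nat -> set R),
    (forall i, i \in I -> measurable (B i)) ->
    P (\bigcap_(i in [set` I]) (X i @^-1` B i)) =
    (\prod_(i <- I) P (X i @^-1` B i))%E.

Definition hhat (R : realType) (eps : R) (h : R -> R) (y w : R) : R :=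
  h w / (`|y| + eps).

Definition ghat (R : realType) (eps : R) (g : R -> R) (y w : R) : R :=
  (`|y| + eps) * g w.

Definition Jquad (R : realType) (Jstar mu xstar : R) (x : R) : R :=
  Jstar + mu / 2 * (x - xstar) ^+ 2.

From HB Require Import structures.
From mathcomp Require Import all_boot all_order all_algebra.
From mathcomp Require Import finmap.
From mathcomp Require Import all_classical all_reals all_analysis.
From mathcomp Require Import ring zify.
Import Order.TTheory GRing.Theory Num.Theory.
Set Implicit Arguments. Unset Strict Implicit. Unset Printing Implicit Defensive.
Local Open Scope classical_set_scope.
Local Open Scope ring_scope.

(* Write k = m + 1.  Unfolding the recursion twice, (x_{m+2} - x* ) y_{m+2} is an
   explicit function of x_m, y_m, y_{m+1}, w_m and w_{m+1}.  As g and h are odd and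
   w_i = +-omega, g (w_i) and h (w_i) are w_i times constants, and the product splits as
   D + w_m Z + w_{m+1} Z', where D is the integrand of the right-hand side, Z is a
   function of w_0, ..., w_{m-1} and Z' of w_0, ..., w_m; identifying the even part in
   w_m only uses w_m^2 = omega^2 and |y_m|^2 = y_m^2.
   A function of w_0, ..., w_{n-1} is a finite combination of indicators of the
   cylinders {w_i = +-omega for i < n}, and independence together with
   P (w_n = omega) = P (w_n = -omega) gives E [w_n 1_C] = 0 for every such cylinder C.
   Hence the odd terms have mean zero, and linearity of expectation concludes
   (gamma = h omega g omega and psi = g omega ^2, the integrands being even in w_0). *)

Lemma odd_at_pm (R : numFieldType) (phi : R -> R) (om s : R) :
  om != 0 -> phi (- om) = - phi om -> s = om \/ s = - om ->
  phi s = phi om / om * s.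
Proof.
by move=> om_neq0 phiN [->|->]; rewrite ?phiN ?mulrN divfK.
Qed.

Section PointwiseIdentity.
Variables (R : realType) (rho beta eps mu xstar Jstar om : R) (g h : R -> R).
Hypotheses (eps_gt0 : 0 < eps) (om_neq0 : om != 0).
Hypotheses (hN : forall v, h (- v) = - h v) (gN : forall v, g (- v) = - g v).

(* [U], [yy], [q], [s] stand for x_{k-1}, y_{k-1}, y_k, w_{k-1}; [drift] is the
   integrand of the right-hand side. *)
Definition x_step (U yy s : R) : R := U - rho * yy + ghat eps g yy s.

Definition y_step (U yy q s : R) : R :=
  (1 - beta) * q
  + hhat eps h yy s * (Jquad Jstar mu xstar (x_step U yy s) - Jquad Jstar mu xstar U).

Definition drift (U yy q x1 : R) : R :=
  - rho * (1 - beta) * q ^+ 2 + mu * (h om * g om) * (U - xstar) ^+ 2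
  + mu * (h om * g om) * ((3 * rho ^+ 2 + g om ^+ 2) / 2) * yy ^+ 2
  - 3 * mu * rho * (h om * g om) * ((U - xstar) * yy)
  + (1 - beta - mu * rho * (h om * g om)) * ((x1 - xstar) * q)
  + mu * (h om * g om) * g om ^+ 2 * eps / 2 * (eps + 2 * `|yy|).

Definition residual (U yy q s : R) : R :=
  (x_step U yy s - xstar - rho * q) * y_step U yy q s - drift U yy q (x_step U yy s).

Lemma residualN U yy q : residual U yy q (- om) = - residual U yy q om.
Proof.
have a_neq0 : `|yy| + eps != 0 by rewrite gt_eqF // ltr_wpDl.
rewrite /residual /drift /y_step /x_step /hhat /ghat /Jquad gN hN.
(* Only the psi-part of the coefficient of yy^2 comes from (|yy| + eps)^2. *)
have -> c : c * ((3 * rho ^+ 2 + g om ^+ 2) / 2) * yy ^+ 2 =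
    c * (3 * rho ^+ 2 / 2) * yy ^+ 2 + c * (g om ^+ 2 / 2) * `|yy| ^+ 2.
  by rewrite real_normK ?num_real //; ring.
by field.
Qed.

Definition residual_coef (U yy q : R) : R := residual U yy q om / om.

Lemma residual_pm U yy q s : s = om \/ s = - om ->
  residual U yy q s = residual_coef U yy q * s.
Proof. exact: odd_at_pm (residualN U yy q). Qed.

Lemma step_product_decomposition U yy q s s' :
  s = om \/ s = - om -> s' = om \/ s' = - om ->
  (x_step (x_step U yy s) q s' - xstar) * y_step U yy q s =
  drift U yy q (x_step U yy s) + s * residual_coef U yy q
  + s' * ((`|q| + eps) * (g om / om) * y_step U yy q s).
Proof.
move=> hs hs'; have gs' := odd_at_pm om_neq0 (gN om) hs'.
rewrite [s * _]mulrC -(residual_pm U yy q hs) /residual {1}/x_step /ghat gs'.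
ring.
Qed.

End PointwiseIdentity.

Section Past.
Variables (R : realType) (d : measure_display) (T : measurableType d) (w : nat -> T -> R).

Definition past (X : Type) (n : nat) (f : T -> X) : Prop :=
  forall t t', (forall i, (i < n)%N -> w i t = w i t') -> f t = f t'.

Lemma past_cst X n (c : X) : past n (fun _ => c).
Proof. by []. Qed.

Lemma past_w n i : (i < n)%N -> past n (w i).
Proof. by move=> hi t t'; apply. Qed.

Lemma past_le X m n (f : T -> X) : (m <= n)%N -> past m f -> past n f.
Proof. by move=> hmn hf t t' e; apply: hf => i hi; apply/e/(leq_trans hi hmn). Qed.

Lemma past1 X Y n (f : T -> X) (op : X -> Y) :
  past n f -> past n (fun t => op (f t)).
Proof. by move=> hf t t' e; rewrite (hf t t' e). Qed.

Lemma past2 X Y Z n (f : T -> X) (g : T -> Y) (op : X -> Y -> Z) :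
  past n f -> past n g -> past n (fun t => op (f t) (g t)).
Proof. by move=> hf hg t t' e; rewrite (hf t t' e) (hg t t' e). Qed.

Lemma past3 X Y Z W n (f : T -> X) (g : T -> Y) (k : T -> Z) (op : X -> Y -> Z -> W) :
  past n f -> past n g -> past n k -> past n (fun t => op (f t) (g t) (k t)).
Proof. by move=> hf hg hk t t' e; rewrite (hf t t' e) (hg t t' e) (hk t t' e). Qed.

End Past.

Section Expectation.
Variables (R : realType) (d : measure_display) (T : measurableType d) (P : probability T R).
Local Notation integrable f := (P.-integrable setT (EFin \o f)).
Local Notation E := (expect P).

Lemma expectD f g : integrable f -> integrable g -> E (fun t => f t + g t) = E f + E g.
Proof. exact: RintegralD. Qed.

Lemma expectZ c f : integrable f -> E (fun t => c * f t) = c * E f.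
Proof. exact: RintegralZl. Qed.

Lemma expectN f : integrable f -> E (fun t => - f t) = - E f.
Proof.
by move=> hf; rewrite -mulN1r -expectZ //; congr E; apply/funext => t; rewrite mulN1r.
Qed.

Lemma expect_cst c : E (fun _ => c) = c.
Proof.
rewrite [LHS]Rintegral_cst // (_ : fine _ = 1) ?mulr1 //.
exact: (congr1 fine (probability_setT P)).
Qed.

Lemma expect_indic A : measurable A -> E (\1_A) = fine (P A).
Proof. by move=> mA; rewrite /expect integral_indic // setIT. Qed.

Lemma integrableZ c f : integrable f -> integrable (fun t => c * f t).
Proof.
move=> hf; apply: (@eq_integrable _ _ _ P _ measurableT
  (fun t => (c%:E * (f t)%:E)%E)); last exact: integrableZl.
by move=> t _; rewrite /= EFinM.
Qed.

Lemma integrable_sumr (I : Type) (s : seq I) (F : I -> T -> R) :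
  (forall i, integrable (F i)) -> integrable (fun t => \sum_(i <- s) F i t).
Proof.
move=> hF; apply: (@eq_integrable _ _ _ P _ measurableT
  (fun t => \sum_(i <- s) (F i t)%:E)) => //.
  by move=> t _; rewrite /= -sumEFin.
by apply: integrable_sum => // i _; exact: hF.
Qed.

Lemma expect_sum (I : Type) (s : seq I) (F : I -> T -> R) :
  (forall i, integrable (F i)) ->
  E (fun t => \sum_(i <- s) F i t) = \sum_(i <- s) E (F i).
Proof.
move=> hF; elim: s => [|i s IHs].
  by under eq_fun do rewrite big_nil; rewrite expect_cst big_nil.
under eq_fun do rewrite big_cons.
by rewrite expectD ?IHs ?big_cons //; exact: integrable_sumr.
Qed.

End Expectation.

Section Cylinders.
Variables (R : realType) (d : measure_display) (T : measurableType d)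
  (P : probability T R) (w : nat -> T -> R) (om : R).
Hypotheses (om_neq0 : om != 0) (w_meas : forall i, measurable_fun setT (w i))
  (w_pm : forall i t, w i t = om \/ w i t = - om)
  (w_sym : forall i, P (w i @^-1` [set om]) = P (w i @^-1` [set - om]))
  (w_indep : mutually_independent P w).
Local Notation integrable f := (P.-integrable setT (EFin \o f)).
Local Notation E := (expect P).

Lemma neq_om_Nom : om != - om.
Proof. by rewrite -addr_eq0 -mulr2n mulrn_eq0 negb_or om_neq0. Qed.

Definition pm (b : bool) : R := if b then om else - om.

Definition iota_fset n : {fset nat} := seq_fset tt (iota 0 n).

Lemma mem_iota_fset n i : (i \in iota_fset n) = (i < n)%N.
Proof. by rewrite seq_fsetE mem_iota. Qed.

Definition cylinder n (b : n.-tuple bool) : set T :=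
  \bigcap_(i in [set` iota_fset n]) (w i @^-1` [set pm (nth false b i)]).

Lemma cylinderP n (b : n.-tuple bool) t :
  cylinder b t <-> forall i, (i < n)%N -> w i t = pm (nth false b i).
Proof.
split=> [Cbt i hi | hb i]; first by apply: Cbt; rewrite /= mem_iota_fset.
by rewrite /= mem_iota_fset => /hb.
Qed.

Lemma measurable_w_preimage1 i v : measurable (w i @^-1` [set v]).
Proof. by rewrite -[_ @^-1` _]setTI; exact: w_meas. Qed.

Lemma measurable_cylinder n (b : n.-tuple bool) : measurable (cylinder b).
Proof.
apply: fin_bigcap_measurable => [|i _]; [exact: finite_fset | exact: measurable_w_preimage1].
Qed.

Definition signs n t : n.-tuple bool := [tuple (w i t == om) | i < n].

Lemma pm_signs n t i : (i < n)%N -> pm (nth false (signs n t) i) = w i t.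
Proof.
move=> hi; rewrite -[i]/(nat_of_ord (Ordinal hi)) -tnth_nth tnth_mktuple /pm.
by case: eqP => [-> // | neq]; case: (w_pm i t).
Qed.

Lemma cylinder_signs n t : cylinder (signs n t) t.
Proof. by apply/cylinderP => i hi; rewrite pm_signs. Qed.

Lemma cylinder_signsE n (b : n.-tuple bool) t : cylinder b t -> b = signs n t.
Proof.
move/cylinderP => Cbt; apply: eq_from_tnth => i.
rewrite tnth_mktuple (tnth_nth false) (Cbt i (ltn_ord i)) /pm.
by case: (nth false b i); rewrite ?eqxx // eq_sym (negbTE neq_om_Nom).
Qed.

Lemma past_indic_cylinder n (b : n.-tuple bool) : past w n (\1_(cylinder b) : T -> R).
Proof.
move=> t t' e; rewrite !indicE; suff -> : (t \in cylinder b) = (t' \in cylinder b) by [].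
by apply/idP/idP => /set_mem/cylinderP Cb; apply/mem_set/cylinderP => i hi;
  rewrite -Cb // e.
Qed.

Lemma past_decomposition n (f : T -> R) : past w n f ->
  exists c : n.-tuple bool -> R, forall t, f t = \sum_b c b * \1_(cylinder b) t.
Proof.
move=> pf.
have /choice[c hc] : forall b : n.-tuple bool, exists r, forall t, cylinder b t -> f t = r.
  move=> b; have [[t0 Cbt0]|noC] := pselect (exists t, cylinder b t); last first.
    by exists 0 => t Cbt; case: noC; exists t.
  exists (f t0) => t /cylinderP Cbt; apply: pf => i hi.
  by rewrite Cbt // (proj1 (cylinderP b t0) Cbt0 i hi).
exists c => t; rewrite (bigD1 (signs n t)) //= big1 ?addr0 => [|b hb].
  by rewrite indicE (mem_set (cylinder_signs t)) mulr1 (hc _ t (cylinder_signs t)).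
rewrite indicE memNset ?mulr0 // => /cylinder_signsE Cbt.
by rewrite Cbt eqxx in hb.
Qed.

Lemma past_integrable n (f : T -> R) : past w n f -> integrable f.
Proof.
move/past_decomposition => [c fE].
rewrite (funext fE); apply: integrable_sumr => b; apply: integrableZ.
exact/integrable_indic/measurable_cylinder.
Qed.

Lemma measure_cylinder_w_sym n (b : n.-tuple bool) :
  P (cylinder b `&` w n @^-1` [set om]) = P (cylinder b `&` w n @^-1` [set - om]).
Proof.
have capE v : cylinder b `&` w n @^-1` [set v] =
    \bigcap_(i in [set` iota_fset n.+1])
      (w i @^-1` (if i == n then [set v] else [set pm (nth false b i)])).
  apply/seteqP; split => t /=.
  - move=> [/cylinderP Cbt wnt] i; rewrite /= mem_iota_fset ltnS leq_eqVlt.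
    by case: eqP => [-> // | _ /= /Cbt].
  - move=> Ct; split; last by have := Ct n; rewrite /= mem_iota_fset ltnS leqnn eqxx; apply.
    apply/cylinderP => i hi; have := Ct i.
    by rewrite /= mem_iota_fset ltnS (ltnW hi) (ltn_eqF hi); apply.
(* the two products over i <= n differ only in their factor i = n *)
rewrite !capE !w_indep; try by move=> i _; case: (i == n); exact: measurable_set1.
by apply: eq_bigr => i _; case: (i == n); rewrite ?w_sym.
Qed.

Lemma indic_preimage1 (f : T -> R) v t : \1_(f @^-1` [set v]) t = (f t == v)%:R :> R.
Proof.
rewrite indicE; suff -> : (t \in f @^-1` [set v]) = (f t == v) by [].
by apply/idP/eqP => [/set_mem // | ftv]; apply/mem_set.
Qed.

Lemma expect_w_indic_cylinder n (b : n.-tuple bool) :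
  E (fun t => w n t * \1_(cylinder b) t) = 0.
Proof.
set Cp := cylinder b `&` w n @^-1` [set om].
set Cm := cylinder b `&` w n @^-1` [set - om].
have mC v : measurable (cylinder b `&` w n @^-1` [set v]).
  by apply: measurableI; [exact: measurable_cylinder | exact: measurable_w_preimage1].
have wE t : w n t = om * \1_(w n @^-1` [set om]) t - om * \1_(w n @^-1` [set - om]) t.
  rewrite !indic_preimage1; case: (w_pm n t) => ->.
    by rewrite eqxx (negbTE neq_om_Nom) /=; ring.
  by rewrite eqxx eq_sym (negbTE neq_om_Nom) /=; ring.
have splitE t : w n t * \1_(cylinder b) t = om * \1_Cp t + (- om) * \1_Cm t.
  by rewrite {1}wE /Cp /Cm !indicI /=; ring.
under eq_fun do rewrite splitE.
rewrite expectD ?expectZ ?expect_indic ?measure_cylinder_w_sym ?mulNr ?addrN //.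
all: try apply: integrableZ; try apply: integrable_indic; exact: mC.
Qed.

Lemma expect_w_past n (f : T -> R) : past w n f -> E (fun t => w n t * f t) = 0.
Proof.
move/past_decomposition => [c fE].
have int_wC (b : n.-tuple bool) : integrable (fun t => w n t * \1_(cylinder b) t).
  apply: (past_integrable (n := n.+1)); apply: past2; first exact: past_w.
  exact: past_le (leqnSn n) (past_indic_cylinder b).
have e t : w n t * f t = \sum_b c b * (w n t * \1_(cylinder b) t).
  by rewrite fE mulr_sumr; apply: eq_bigr => b _; rewrite mulrCA.
under eq_fun do rewrite e.
rewrite expect_sum => [|b]; last exact: integrableZ.
by rewrite big1 // => b _; rewrite expectZ // expect_w_indic_cylinder mulr0.
Qed.

End Cylinders.

Lemma expect_even_w (R : realType) (d : measure_display) (T : measurableType d)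
  (P : probability T R) (w : nat -> T -> R) (om : R) (phi : R -> R) i :
  (forall t, w i t = om \/ w i t = - om) -> phi (- om) = phi om ->
  expect P (fun t => phi (w i t)) = phi om.
Proof.
move=> w_pm phiN; rewrite -[RHS](expect_cst P); congr expect; apply/funext => t.
by case: (w_pm t) => ->.
Qed.

Section Recursion.
Variables (R : realType) (d : measure_display) (T : measurableType d) (P : probability T R).
Variables (rho beta eps mu xstar Jstar om x0 y0 y1 : R) (g h : R -> R) (w x y : nat -> T -> R).
Hypotheses (eps_gt0 : 0 < eps) (om_neq0 : om != 0).
Hypotheses (w_meas : forall i, measurable_fun setT (w i))
  (w_pm : forall i t, w i t = om \/ w i t = - om)
  (w_sym : forall i, P (w i @^-1` [set om]) = P (w i @^-1` [set - om]))
  (w_indep : mutually_independent P w).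
Hypotheses (hN : forall v, h (- v) = - h v) (gN : forall v, g (- v) = - g v).
Hypotheses (x_0 : forall t, x 0%N t = x0) (y_0 : forall t, y 0%N t = y0)
  (y_1 : forall t, y 1%N t = y1)
  (x_S : forall k t, x k.+1 t = x k t - rho * y k t + ghat eps g (y k t) (w k t))
  (y_S : forall k t, (1 <= k)%N ->
     y k.+1 t = (1 - beta) * y k t
       + hhat eps h (y k.-1 t) (w k.-1 t)
         * (Jquad Jstar mu xstar (x k t) - Jquad Jstar mu xstar (x k.-1 t))).
Local Notation E := (expect P).
Local Notation drift := (drift rho beta eps mu xstar om g h).

Lemma dynamics_past k : past w k (x k) /\ past w k (y k) /\ past w k (y k.+1).
Proof.
elim: k => [|k [px [py py1]]].
  by split; [|split] => t t' _; rewrite ?x_0 ?y_0 ?y_1.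
have [px' py' py1'] :=
  And3 (past_le (leqnSn k) px) (past_le (leqnSn k) py) (past_le (leqnSn k) py1).
have px1 : past w k.+1 (x k.+1).
  by move=> t t' e; rewrite !x_S (px' _ _ e) (py' _ _ e) (e k (ltnSn k)).
split=> //; split=> // t t' e.
by rewrite !(@y_S k.+1) //= (py1' _ _ e) (py' _ _ e) (px1 _ _ e) (px' _ _ e) (e k (ltnSn k)).
Qed.

Lemma x_past k n : (k <= n)%N -> past w n (x k).
Proof. by move=> hk; have [px _] := dynamics_past k; exact: past_le hk px. Qed.

Lemma y_past k n : (k <= n.+1)%N -> past w n (y k).
Proof.
case: k => [_ | k].
  by have [_ [py _]] := dynamics_past 0; exact: past_le (leq0n n) py.
by rewrite ltnS => hk; have [_ [_ py1]] := dynamics_past k; exact: past_le hk py1.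
Qed.

Ltac past_tac := repeat match goal with |- past _ _ _ =>
  first [ assumption | exact: past_cst | apply: past_w; lia | apply: x_past; lia
        | apply: y_past; lia | apply: past3 | apply: past2 | apply: past1 ] end.

Lemma expect_drift n (U yy q x1 : T -> R) :
  past w n U -> past w n yy -> past w n q -> past w n x1 ->
  E (fun t => drift (U t) (yy t) (q t) (x1 t)) =
    - rho * (1 - beta) * E (fun t => q t ^+ 2)
    + mu * (h om * g om) * E (fun t => (U t - xstar) ^+ 2)
    + mu * (h om * g om) * ((3 * rho ^+ 2 + g om ^+ 2) / 2) * E (fun t => yy t ^+ 2)
    - 3 * mu * rho * (h om * g om) * E (fun t => (U t - xstar) * yy t)
    + (1 - beta - mu * rho * (h om * g om)) * E (fun t => (x1 t - xstar) * q t)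
    + mu * (h om * g om) * g om ^+ 2 * eps / 2 * (eps + 2 * E (fun t => `|yy t|)).
Proof.
move=> pU pyy pq px1; rewrite /drift.
rewrite !expectD ?expectN ?expectZ ?expectD ?expectZ ?expect_cst //.
all: apply: (past_integrable P om_neq0 w_meas w_pm (n := n)); past_tac.
Qed.

Lemma xt_y_decomposition k t :
  (x k.+2 t - xstar) * y k.+2 t =
  drift (x k t) (y k t) (y k.+1 t) (x k.+1 t)
  + w k t * residual_coef rho beta eps mu xstar Jstar om g h (x k t) (y k t) (y k.+1 t)
  + w k.+1 t * ((`|y k.+1 t| + eps) * (g om / om) * y k.+2 t).
Proof.
have x1E : x k.+1 t = x_step rho eps g (x k t) (y k t) (w k t) := x_S k t.
have y2E : y k.+2 t = y_step rho beta eps mu xstar Jstar g h (x k t) (y k t) (y k.+1 t) (w k t).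
  by rewrite y_S // x1E.
by rewrite (x_S k.+1) y2E x1E; apply: step_product_decomposition.
Qed.

Lemma expect_xt_y_drift k :
  E (fun t => (x k.+2 t - xstar) * y k.+2 t) =
  E (fun t => drift (x k t) (y k t) (y k.+1 t) (x k.+1 t)).
Proof.
have past_integrable_k2 (f : T -> R) : past w k.+2 f -> P.-integrable setT (EFin \o f).
  by move=> pf; apply: (past_integrable P om_neq0 w_meas w_pm pf).
under eq_fun do rewrite xt_y_decomposition.
rewrite expectD ?expectD ?(expect_w_past om_neq0 w_meas w_pm w_sym w_indep (n := k))
  ?(expect_w_past om_neq0 w_meas w_pm w_sym w_indep (n := k.+1)) ?addr0 //.
all: try apply: past_integrable_k2; past_tac.
Qed.

Lemma expect_xt_y_recursion k :
  E (fun t => (x k.+2 t - xstar) * y k.+2 t) =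
    - rho * (1 - beta) * E (fun t => y k.+1 t ^+ 2)
    + mu * (h om * g om) * E (fun t => (x k t - xstar) ^+ 2)
    + mu * (h om * g om) * ((3 * rho ^+ 2 + g om ^+ 2) / 2) * E (fun t => y k t ^+ 2)
    - 3 * mu * rho * (h om * g om) * E (fun t => (x k t - xstar) * y k t)
    + (1 - beta - mu * rho * (h om * g om)) * E (fun t => (x k.+1 t - xstar) * y k.+1 t)
    + mu * (h om * g om) * g om ^+ 2 * eps / 2 * (eps + 2 * E (fun t => `|y k t|)).
Proof. by rewrite expect_xt_y_drift (expect_drift (n := k.+1)); past_tac. Qed.

End Recursion.

Theorem lemma8 (R : realType) (d : measure_display) (T : measurableType d)
  (P : probability T R)
  (rho beta eps omega mu xstar Jstar x0 y0 y1 : R)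
  (h g : R -> R) (w : nat -> T -> R) (x y : nat -> T -> R) :
  0 < rho -> 0 < beta -> beta < 2 -> 0 < eps -> 0 < omega -> 0 < mu ->
  (* the w_i: measurable, valued in {-omega, omega}, each value w.p. 1/2, i.i.d. *)
  (forall i, measurable_fun setT (w i)) ->
  (forall i t, w i t = omega \/ w i t = - omega) ->
  (forall i, P (w i @^-1` [set omega]) = (2^-1)%:E) ->
  (forall i, P (w i @^-1` [set - omega]) = (2^-1)%:E) ->
  mutually_independent P w ->
  (* h, g odd, same sign, vanishing exactly at 0 *)
  (forall v, h (- v) = - h v) -> (forall v, g (- v) = - g v) ->
  (forall v, Num.sg (g v) = Num.sg (h v)) ->
  (forall v, g v = 0 <-> v = 0) -> (forall v, h v = 0 <-> v = 0) ->
  (* the system, with deterministic x_0, y_0, y_1 *)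
  (forall t, x 0%N t = x0) -> (forall t, y 0%N t = y0) -> (forall t, y 1%N t = y1) ->
  (forall k t, x k.+1 t = x k t - rho * y k t + ghat eps g (y k t) (w k t)) ->
  (forall k t, (1 <= k)%N ->
     y k.+1 t = (1 - beta) * y k t
       + hhat eps h (y k.-1 t) (w k.-1 t)
         * (Jquad Jstar mu xstar (x k t) - Jquad Jstar mu xstar (x k.-1 t))) ->
  let E := expect P in
  let xt := fun k t => x k t - xstar in
  let psi := E (fun t => g (w 0%N t) ^+ 2) in
  let gam := E (fun t => h (w 0%N t) * g (w 0%N t)) in
  forall k : nat, (1 <= k)%N ->
  E (fun t => xt k.+1 t * y k.+1 t) =
    - rho * (1 - beta) * E (fun t => y k t ^+ 2)
    + mu * gam * E (fun t => xt k.-1 t ^+ 2)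
    + mu * gam * ((3 * rho ^+ 2 + psi) / 2) * E (fun t => y k.-1 t ^+ 2)
    - 3 * mu * rho * gam * E (fun t => xt k.-1 t * y k.-1 t)
    + (1 - beta - mu * rho * gam) * E (fun t => xt k t * y k t)
    + mu * gam * psi * eps / 2 * (eps + 2 * E (fun t => `|y k.-1 t|)).
Proof.
move=> _ _ _ eps_gt0 om_gt0 _ w_meas w_pm Pw_om Pw_Nom w_indep hN gN _ _ _ x_0 y_0 y_1 x_S y_S
  E xt psi gam [//|k] _.
have om_neq0 : omega != 0 by rewrite gt_eqF.
have w_sym i : P (w i @^-1` [set omega]) = P (w i @^-1` [set - omega]).
  by rewrite Pw_om Pw_Nom.
have -> : gam = h omega * g omega.
  by apply: (@expect_even_w _ _ _ P w omega (fun v => h v * g v)); rewrite // hN gN mulrNN.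
have -> : psi = g omega ^+ 2.
  by apply: (@expect_even_w _ _ _ P w omega (fun v => g v ^+ 2)); rewrite // gN sqrrN.
exact: (expect_xt_y_recursion eps_gt0 om_neq0 w_meas w_pm w_sym w_indep hN gN
  x_0 y_0 y_1 x_S y_S k).
Qed.
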